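(* For all $x, e \in \mathcal{P}$ we have $x \in \ell_e$ if and only if $e \in \ell_{x^{q/2}}$.
   Context: Let $q = 2^m$, let $E = \mathbb{F}_{q^4}$, and define $\mathcal{P} = \{x \in E \mid x^{q^3+q^2+q+1} = 1\}$. For $e \in \mathcal{P}$, let $$\ell_e = \{x \in \mathcal{P} \mid x^{q+1} + (e^{q^2+q+2} + e^{q+1})x + e^2 = 0\}.$$ *)

From mathcomp Require Import all_boot all_algebra all_field.
Set Implicit Arguments. Unset Strict Implicit. Unset Printing Implicit Defensive.
Import GRing.Theory.
Local Open Scope ring_scope.

Definition inP (E : finFieldType) (q : nat) (x : E) : bool :=
  x ^+ (q ^ 3 + q ^ 2 + q + 1)%N == 1.

Definition in_ell (E : finFieldType) (q : nat) (e x : E) : bool :=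
  inP q x &&
  (x ^+ (q + 1)%N + (e ^+ (q ^ 2 + q + 2)%N + e ^+ (q + 1)%N) * x + e ^+ 2 == 0).

From mathcomp Require Import all_boot all_algebra all_field.
From mathcomp Require Import ring.
Set Implicit Arguments.
Unset Strict Implicit.
Unset Printing Implicit Defensive.
Import GRing.Theory.
Local Open Scope ring_scope.

(* Write A_e(x) for the polynomial defining ell_e and y = x^(q/2), so y^2 = x^q.
   In characteristic 2, squaring and a |-> a^q are additive, and together with
   the norm-one relations x x^q x^(q^2) x^(q^3) = 1 = e e^q e^(q^2) e^(q^3) this
   gives the identity  x A_y(e)^2 = x^q A_e(x) + x e^2 A_e(x)^q.  As x <> 0,
   x in ell_e forces e in ell_y.  Applying this implication to the pair (e, y)
   gives A_(e^(q/2))(y) = A_e(x)^(q/2) = 0, hence the converse. *)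

Definition ell_form (E : finFieldType) (q : nat) (e x : E) : E :=
  x ^+ (q + 1) + (e ^+ (q ^ 2 + q + 2) + e ^+ (q + 1)) * x + e ^+ 2.

Lemma in_ellE (E : finFieldType) (q : nat) (e x : E) :
  in_ell q e x = inP q x && (ell_form q e x == 0).
Proof. by []. Qed.

Lemma inP_exp (E : finFieldType) (q n : nat) (a : E) : inP q a -> inP q (a ^+ n).
Proof. by move=> /eqP Pa; rewrite /inP -exprM mulnC exprM Pa expr1n. Qed.

Lemma inP_neq0 (E : finFieldType) (q : nat) (a : E) : inP q a -> a != 0.
Proof. by apply: contraTneq => ->; rewrite /inP expr0n addn1 eq_sym oner_eq0. Qed.

Section CharTwo.

Variable E : finFieldType.
Hypothesis pcharE2 : 2 \in [pchar E].

Lemma exprD_pow2 (k : nat) (a b : E) :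
  (a + b) ^+ (2 ^ k) = a ^+ (2 ^ k) + b ^+ (2 ^ k).
Proof.
by apply: exprDn_pchar; rewrite pnatX (pnatE _ (pcharf_prime pcharE2)) pcharE2.
Qed.

Lemma ell_form_pow2 (q k : nat) (e x : E) :
  ell_form q e x ^+ (2 ^ k) = ell_form q (e ^+ (2 ^ k)) (x ^+ (2 ^ k)).
Proof. by rewrite /ell_form !exprD_pow2 exprMn exprD_pow2 -!exprM !(mulnC (2 ^ k)%N). Qed.

Section NormOne.

Variable m : nat.
Local Notation q := (2 ^ m)%N.

Lemma inP_norm (a : E) : inP q a -> a * a ^+ q * a ^+ q ^+ q * a ^+ q ^+ q ^+ q = 1.
Proof.
move=> /eqP <-; rewrite -!exprM -[X in X * _ * _ * _]expr1 -!exprD.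
by congr (_ ^+ _); rewrite !expnS expn0 !muln1; ring.
Qed.

Lemma ell_form_dual (x e : E) : (0 < m)%N -> inP q x -> inP q e ->
  x * ell_form q (x ^+ (2 ^ m.-1)) e ^+ 2
  = x ^+ q * ell_form q e x + x * e ^+ 2 * ell_form q e x ^+ q.
Proof.
move=> m_gt0 Px Pe.
have := ell_form_pow2 q 1 (x ^+ (2 ^ m.-1)) e; rewrite expn1 => ->.
rewrite ell_form_pow2 -exprM -expnSr prednK //.
have Nx := inP_norm Px; have Ne := inP_norm Pe.
rewrite /ell_form !exprD !expr1 -mulnn !exprM [e ^+ 2 ^+ q]exprAC.
move: Nx Ne; set x1 := x ^+ q; set x2 := x1 ^+ q; set x3 := x2 ^+ q.
set e1 := e ^+ q; set e2 := e1 ^+ q; set e3 := e2 ^+ q => Nx Ne.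
apply/eqP; rewrite -subr_eq0; apply/eqP.
transitivity (e ^+ 2 * x1 * (x * x1 * x2 * x3 - 1)
  - e * e1 * x1 * x * (1 + e * e1 * e2 * e3) - 2%:R * e ^+ 2 * e1 * e2 * x1 * x).
  by ring.
by rewrite Nx Ne subrr addrr_pchar2 // (pcharf0 pcharE2); ring.
Qed.

Lemma in_ell_dual (x e : E) : (0 < m)%N -> inP q x -> inP q e ->
  in_ell q e x -> in_ell q (x ^+ (2 ^ m.-1)) e.
Proof.
move=> m_gt0 Px Pe; rewrite !in_ellE Pe => /andP[_ /eqP Ax] /=.
have := ell_form_dual m_gt0 Px Pe.
rewrite Ax mulr0 add0r expr0n expn_eq0 /= mulr0 => /eqP.
by rewrite mulf_eq0 (negPf (inP_neq0 Px)) expf_eq0.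
Qed.

End NormOne.
End CharTwo.

Theorem mainTheorem7 (m : nat) (hm : (0 < m)%N) (E : finFieldType)
    (hE : #|E| = ((2 ^ m) ^ 4)%N) (x e : E) :
  inP (2 ^ m) x -> inP (2 ^ m) e ->
  (in_ell (2 ^ m) e x <-> in_ell (2 ^ m) (x ^+ (2 ^ m.-1)%N) e).
Proof.
move=> Px Pe.
have pcharE2 : 2 \in [pchar E].
  by apply: (@card_finPcharP _ 2 (m * 4)); rewrite // hE expnM.
split; first exact: in_ell_dual.
have Py : inP (2 ^ m) (x ^+ (2 ^ m.-1)) := inP_exp _ Px.
move=> /(in_ell_dual pcharE2 hm Pe Py); rewrite !in_ellE Px => /andP[_].
by rewrite -ell_form_pow2 // expf_eq0 => /andP[].
Qed.
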